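(* For every integer $k\ge 12$ with $k\not\equiv 2\pmod 3$, put $p_4=9k^2+17k+17$ and $q_4=9k^2+8k+9$. Then $p_4/q_4=[[2]^k,2+k,9]$, $q_4^{-1}=k^2+2k+2$, $\gcd(p_4,30)=1$, and the type $T=\{(2,1),(3,2),(5,4),(p_4,q_4)\}$ satisfies $K^2(T)=\frac{3k^2+139k+154}{15(9k^2+17k+17)}$ and $0<K^2(T)<3e_{\mathrm{orb}}(T)=\frac1{10}+\frac{3}{p_4}$; however, $Q_{X(2,1)}\oplus Q_{X(3,2)}\oplus Q_{X(5,4)}\oplus Q_{X(p_4,q_4)}$ admits no lattice embedding into $-\mathbb{Z}^{k+10}$.
   Context: $[2]^k$ denotes $k$ consecutive entries equal to $2$ in a Hirzebruch–Jung continued fraction $[a_1,\dots,a_\ell]=a_1-1/(a_2-1/(\cdots-1/a_\ell))$ ($a_i\ge2$). $q_4^{-1}$ is the inverse of $q_4$ mod $p_4$ in $(0,p_4)$. For coprime $p>q>0$ with $p/q=[a_1,\dots,a_\ell]$, $Q_{X(p,q)}$ is $\mathbb{Z}^\ell$ with basis $v_1,\dots,v_\ell$, $v_i\cdot v_i=-a_i$, $v_i\cdot v_{i+1}=1$, other products $0$. $-\mathbb{Z}^N$ is $\mathbb{Z}^N$ with $e_i\cdot e_j=-\delta_{ij}$; lattice embeddings are injective form-preserving $\mathbb{Z}$-linear maps. For a type $T=\{(p_i,q_i)\}_{i=1}^4$ write $p_i/(p_i-q_i)=[n_{i,1},\dots,n_{i,\ell_i}]$, $L=\sum\ell_i$;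 $K^2(T)=9-3L+\sum_{i,j}n_{i,j}-\sum_i\frac{q_i+q_i^{-1}-2}{p_i}$, $e_{\mathrm{orb}}(T)=3-\sum_i(1-1/p_i)$. *)

From mathcomp Require Import all_boot all_order all_algebra.
Set Implicit Arguments. Unset Strict Implicit. Unset Printing Implicit Defensive.
Import Order.TTheory GRing.Theory Num.Theory.
Local Open Scope ring_scope.

Fixpoint hjval (s : seq nat) : rat :=
  match s with
  | [::] => 0
  | [:: a] => a%:R
  | a :: s' => a%:R - (hjval s')^-1
  end.

(* The HJ expansion of p/q (coprime p > q > 0): a_1 = ceil(p/q), and then
   the expansion of q/(a_1 q - p).  [f] is fuel (q strictly decreases). *)
Fixpoint hjexp_rec (f p q : nat) : seq nat :=
  if f is f'.+1 then
    if q is 0 then [::] else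
    let a := ((p + q.-1) %/ q)%N in
    if (a * q == p)%N then [:: a] else a :: hjexp_rec f' q (a * q - p)
  else [::].

Definition hjexp (p q : nat) : seq nat := hjexp_rec q.+1 p q.

Definition qinv (p q : nat) : nat :=
  nth 0%N [seq x <- iota 1 p.-1 | (q * x %% p == 1 %% p)%N] 0%N.

Definition Ltot (T : seq (nat * nat)) : nat :=
  sumn [seq size (hjexp t.1 (t.1 - t.2)) | t <- T].

Definition K2 (T : seq (nat * nat)) : rat :=
  9 - 3 * (Ltot T)%:R
  + (sumn (flatten [seq hjexp t.1 (t.1 - t.2) | t <- T]))%:R
  - \sum_(t <- T) (((t.2 + qinv t.1 t.2)%:R - 2) / t.1%:R).

Definition eorb (T : seq (nat * nat)) : rat :=
  3 - \sum_(t <- T) (1 - (t.1%:R)^-1).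

(* Intersection lattice of the orthogonal direct sum of the linear chains
   Q_{X(p_i,q_i)}, with respect to the concatenated basis. *)
Definition chains (T : seq (nat * nat)) : seq (seq nat) :=
  [seq hjexp t.1 t.2 | t <- T].

Definition chain_ids (cs : seq (seq nat)) : seq nat :=
  flatten [seq nseq (size (nth [::] cs i)) i | i <- iota 0 (size cs)].

Definition gram_sum (cs : seq (seq nat)) : 'M[int]_(size (flatten cs)) :=
  \matrix_(i, j)
    if i == j then - ((nth 0%N (flatten cs) i)%:Z)
    else if (((i.+1 == j) || (j.+1 == i)) &&
             (nth 0%N (chain_ids cs) i == nth 0%N (chain_ids cs) j))%N
         then 1 else 0.

(* A lattice embedding of (Z^n, G) into -Z^N: an injective Z-linear map
   x |-> x *m A with (xA).(yA)_{-Z^N} = - (xA)(yA)^T = x G y^T. *)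
Definition embeds_into_negZ (n : nat) (G : 'M[int]_n) (N : nat) : Prop :=
  exists A : 'M[int]_(n, N),
    (forall x : 'rV[int]_n, x *m A = 0 -> x = 0) /\ A *m A^T = - G.

(* The continued fractions come from running the HJ algorithm on p4/q4 and on
   p4/(p4 - q4) = [k+2, [2]^(k-1), 3, [2]^7]; q4 (k^2 + 2k + 2) = (k^2 + k + 1) p4 + 1
   gives the inverse, and K^2 and e_orb are then rational-function identities.

   For the lattice: an embedding sends each of the m = k + 7 vertices of weight -2 to
   a vector +-e_a +- e_b of -Z^N.  As any two non-adjacent vertices are separated by a
   third one, two such images share a coordinate only if the vertices are adjacent,
   and then with product -1 there; hence every coordinate is used at most twice and
   2m + #(coordinates used once) <= 2N.  An isolated vertex owns both its coordinates
   and an end of a chain owns one.  The (-2)-vertices form one isolated vertex and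
   three chains, so 2(k + 7) + 8 <= 2(k + 10), which is false. *)

From mathcomp Require Import all_boot all_order all_algebra.
From mathcomp Require Import zify ring lra.
Import Order.TTheory GRing.Theory Num.Theory.
Set Implicit Arguments. Unset Strict Implicit. Unset Printing Implicit Defensive.

Definition p4 (k : nat) : nat := 9 * k ^ 2 + 17 * k + 17.
Definition q4 (k : nat) : nat := 9 * k ^ 2 + 8 * k + 9.

Lemma hjexp_rec_step f p q a r : r < q -> p + q.-1 = a * q + r ->
  hjexp_rec f.+1 p q = if a * q == p then [:: a] else a :: hjexp_rec f q (a * q - p).
Proof. by case: q => [//|q] rq E /=; rewrite E divnMDl // divn_small // addn0. Qed.

(* On (x + d, x) with d < x the algorithm outputs 2 and continues with (x, x - d). *)
Lemma hjexp_rec_twos f n d s : 0 < d -> 0 < s ->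
  hjexp_rec (f + n) (n * d + s + d) (n * d + s) = nseq n 2 ++ hjexp_rec f (s + d) s.
Proof.
move=> d0 s0; elim: n => [|n IH] /=; first by rewrite addn0 mul0n add0n.
rewrite addnS (@hjexp_rec_step _ _ _ 2 d.-1); [|lia|lia].
have -> : (2 * (n.+1 * d + s) == n.+1 * d + s + d) = false by lia.
rewrite (_ : 2 * (n.+1 * d + s) - (n.+1 * d + s + d) = n * d + s); last by lia.
by rewrite (_ : n.+1 * d + s = n * d + s + d) ?IH //; lia.
Qed.

Lemma hjexp_p4_q4 k : hjexp (p4 k) (q4 k) = nseq k 2 ++ [:: k + 2; 9].
Proof.
rewrite /hjexp /p4 /q4.
rewrite (_ : (9 * k ^ 2 + 8 * k + 9).+1 = (9 * k ^ 2 + 7 * k + 8).+2 + k); last by lia.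
rewrite (_ : 9 * k ^ 2 + 17 * k + 17 = k * (9 * k + 8) + 9 + (9 * k + 8)); last by ring.
rewrite (_ : 9 * k ^ 2 + 8 * k + 9 = k * (9 * k + 8) + 9); last by ring.
rewrite hjexp_rec_twos //; last lia.
f_equal.
rewrite (@hjexp_rec_step _ _ _ (k + 2) 7); [|lia|lia].
have -> : ((k + 2) * 9 == 9 + (9 * k + 8)) = false by lia.
by rewrite (_ : (k + 2) * 9 - (9 + (9 * k + 8)) = 1); last by lia.
Qed.

Lemma hjexp_p4_dual k : 0 < k ->
  hjexp (p4 k) (p4 k - q4 k) = k + 2 :: nseq k.-1 2 ++ 3 :: nseq 7 2.
Proof.
move=> k0; rewrite /hjexp /p4 /q4.
rewrite (_ : 9 * k ^ 2 + 17 * k + 17 - (9 * k ^ 2 + 8 * k + 9) = 9 * k + 8); last by lia.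
rewrite (@hjexp_rec_step _ _ _ (k + 2) 8); [|lia|nia].
have -> : ((k + 2) * (9 * k + 8) == 9 * k ^ 2 + 17 * k + 17) = false by nia.
rewrite (_ : (k + 2) * (9 * k + 8) - (9 * k ^ 2 + 17 * k + 17) = k.-1 * 9 + 8);
  last by nia.
rewrite {2}(_ : 9 * k + 8 = k.-1 * 9 + 8 + 9); last by lia.
rewrite {1}(_ : 9 * k + 8 = (8 * k + 8).+1 + k.-1); last by lia.
rewrite hjexp_rec_twos //= (_ : (8 + 9 + 7) %/ 8 = 3) //.
have E := @hjexp_rec_twos (8 * k + 2) 6 1 1 isT isT.
by rewrite -addnA in E; rewrite E (addn2 (8 * k)).
Qed.

Lemma qinv_spec p q x : 1 < p -> 0 < x < p -> q * x = 1 %[mod p] -> qinv p q = x.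
Proof.
move=> p1 /andP[x0 xp] qx; rewrite /qinv.
have inv_uniq y : y \in iota 1 p.-1 -> q * y == 1 %[mod p] -> y = x.
  rewrite mem_iota => /andP[y1 yp] /eqP qy.
  rewrite -(modn_small xp) -(modn_small (_ : y < p)); last by lia.
  rewrite -[y in LHS]muln1 -modnMmr -qx modnMmr mulnA [y * q]mulnC.
  by rewrite -modnMml qy modnMml mul1n.
have : x \in [seq y <- iota 1 p.-1 | q * y == 1 %[mod p]].
  by rewrite mem_filter mem_iota qx eqxx /=; lia.
case E: [seq y <- _ | _] => [//|y s] _ /=.
have : y \in [seq y <- iota 1 p.-1 | q * y == 1 %[mod p]] by rewrite E mem_head.
by rewrite mem_filter => /andP[qy iy]; apply: inv_uniq.
Qed.

Lemma qinv_pred n : 1 < n -> qinv n n.-1 = n.-1.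
Proof.
move=> n1; apply: qinv_spec => //; first by apply/andP; split; lia.
by rewrite (_ : n.-1 * n.-1 = (n - 2) * n + 1) ?modnMDl //; nia.
Qed.

Lemma qinv_p4_q4 k : qinv (p4 k) (q4 k) = k ^ 2 + 2 * k + 2.
Proof.
apply: qinv_spec; rewrite /p4 /q4; [lia | apply/andP; split; nia |].
rewrite (_ : (9 * k ^ 2 + 8 * k + 9) * (k ^ 2 + 2 * k + 2) =
   (k ^ 2 + k + 1) * (9 * k ^ 2 + 17 * k + 17) + 1); last by ring.
by rewrite modnMDl.
Qed.

Lemma coprime_p4_30 k : k %% 3 != 2 -> gcdn (p4 k) 30 = 1.
Proof.
have p4_mod30 : p4 k = p4 (k %% 30) %[mod 30].
  rewrite {1}(divn_eq k 30) /p4; set q := k %/ 30; set r := k %% 30.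
  rewrite (_ : 9 * (q * 30 + r) ^ 2 + 17 * (q * 30 + r) + 17 =
    (270 * q ^ 2 + 18 * q * r + 17 * q) * 30 + (9 * r ^ 2 + 17 * r + 17)); last by ring.
  by rewrite modnMDl.
rewrite -(modn_dvdm k (_ : 3 %| 30)) // -gcdn_modl p4_mod30 gcdn_modl.
have : k %% 30 < 30 by rewrite ltn_pmod.
by move: (k %% 30) => r; do 30?[case: r => [|r] //].
Qed.

Local Open Scope ring_scope.

Lemma hjval_cons a s : s != [::] -> hjval (a :: s) = a%:R - (hjval s)^-1.
Proof. by case: s. Qed.

Lemma hjval_twos_tail (k j : nat) :
  hjval (nseq j 2%N ++ [:: (k + 2)%N; 9%N]) =
  (9 * k + 17 + j * (9 * k + 8))%:R / (9 + j * (9 * k + 8))%:R.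
Proof.
elim: j => [|j IH]; first by rewrite /= !natrD; field.
have den_nz : (9 * k + 17 + j * (9 * k + 8))%:R != 0 :> rat by rewrite pnatr_eq0; lia.
rewrite [nseq _ _ ++ _]/= hjval_cons; last by case: j {IH den_nz}.
rewrite IH invf_div.
rewrite (_ : (9 + j.+1 * (9 * k + 8))%N = (9 * k + 17 + j * (9 * k + 8))%N); last by lia.
apply: (mulIf den_nz); rewrite mulfVK // mulrBl divfK // -natrM -natrB; last by nia.
by congr (_ %:R); nia.
Qed.

Lemma hjval_p4_q4 k : (p4 k)%:R / (q4 k)%:R = hjval (nseq k 2%N ++ [:: (2 + k)%N; 9%N]).
Proof.
rewrite addnC hjval_twos_tail /p4 /q4.
by congr (_%:R / _%:R); ring.
Qed.

Lemma p4_gt0 k : (0 < p4 k)%N. Proof. by rewrite /p4 addn_gt0 orbT. Qed.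

Definition T4 (k : nat) : seq (nat * nat) := [:: (2, 1); (3, 2); (5, 4); (p4 k, q4 k)]%N.

Lemma K2_T4 k : (0 < k)%N ->
  K2 (T4 k) = (3 * k ^ 2 + 139 * k + 154)%:R / (15 * p4 k)%:R.
Proof.
move=> k0; rewrite /K2 /Ltot !big_cons big_nil /= hjexp_p4_dual // qinv_p4_q4 !qinv_pred //.
rewrite !subSS !subn0 !divn1 /= !size_cat !size_nseq !sumn_cat !sumn_nseq /=.
case: k k0 => // j _ /=.
rewrite /p4 /q4; field.
by apply: lt0r_neq0; have := ler0n rat j; nra.
Qed.

Lemma eorb_T4 k : 3 * eorb (T4 k) = 1 / 10 + 3 / (p4 k)%:R.
Proof.
rewrite /eorb !big_cons big_nil /= /p4; field.
by apply: lt0r_neq0; have := ler0n rat k; nra.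
Qed.

Lemma K2_T4_lt k : (12 <= k)%N -> K2 (T4 k) < 1 / 10 + 3 / (p4 k)%:R.
Proof.
move=> k12; have k12' : 12 <= k%:R :> rat by rewrite (ler_nat rat 12).
have p4_pos : 0 < (p4 k)%:R :> rat by rewrite ltr0n p4_gt0.
rewrite K2_T4; last by apply: leq_trans k12.
rewrite natrM ltr_pdivrMr; last by rewrite mulr_gt0.
rewrite [X in _ < X](_ : _ = 3 / 2 * (p4 k)%:R + 45); last by field; exact: lt0r_neq0.
rewrite /p4 !(natrD, natrM, natrX); nra.
Qed.

Definition dotv N (x y : 'I_N -> int) : int := \sum_(c < N) x c * y c.

Definition pm1 (z : int) := z = 1 \/ z = -1.

Lemma dotv_supp2 N (x v : 'I_N -> int) (a b : 'I_N) : a != b ->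
  (forall c, c != a -> c != b -> v c = 0) -> dotv x v = x a * v a + x b * v b.
Proof.
move=> ab v0; rewrite /dotv (bigD1 a) //= (bigD1 b) 1?eq_sym //=.
by rewrite big1 ?addr0 // => c /andP[ca cb]; rewrite v0 ?mulr0.
Qed.

Lemma dotv_norm2 N (v : 'I_N -> int) : dotv v v = 2 ->
  exists a b, [/\ a != b, pm1 (v a), pm1 (v b) &
     forall c, c != a -> c != b -> v c = 0].
Proof.
move=> v2; have sq_le2 c : v c * v c <= 2.
  rewrite -v2 /dotv (bigD1 c) //= lerDl.
  by apply: sumr_ge0 => e _; rewrite -expr2 sqr_ge0.
have pm c : v c != 0 -> pm1 (v c) by have := sq_le2 c; rewrite /pm1; nia.
have sq_01 c : v c * v c = (v c != 0)%:R.
  by have [->|/pm[]->] := eqVneq (v c) 0; rewrite ?mulr0.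
have : #|[set c | v c != 0]| == 2%N.
  rewrite -(eqr_nat int) -v2 /dotv (eq_bigr _ (fun c _ => sq_01 c)) -natr_sum.
  by rewrite cardsE -sum1_card [in X in X%:R == _]big_mkcond.
case/cards2P=> a [b [ab supp]].
have supp_ab c : (v c != 0) = (c \in [set a; b]) by rewrite -supp inE.
exists a, b; split=> [||| c ca cb] //.
- by apply: pm; rewrite supp_ab !inE eqxx.
- by apply: pm; rewrite supp_ab !inE eqxx orbT.
- by apply/eqP; rewrite -[_ == 0]negbK supp_ab !inE negb_or ca cb.
Qed.

Lemma dotv_norm2_at N (v : 'I_N -> int) c : dotv v v = 2 -> v c != 0 ->
  exists c', [/\ c' != c, pm1 (v c), pm1 (v c') &
     forall e, e != c -> e != c' -> v e = 0].
Proof.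
case/dotv_norm2=> a [b [ab pa pb v0]] vc.
have [->|ca] := eqVneq c a; first by exists b; rewrite eq_sym.
have [->|cb] := eqVneq c b; first by exists a; split=> // e eb ea; apply: v0.
by move: vc; rewrite v0 ?eqxx.
Qed.

Section RootConfiguration.

Variables (N m : nat) (r : nat -> 'I_N -> int) (adj : rel nat).

Hypothesis r_norm : forall i, (i < m)%N -> dotv (r i) (r i) = 2.
Hypothesis r_dot : forall i j, (i < m)%N -> (j < m)%N -> i != j ->
  dotv (r i) (r j) = if adj i j then -1 else 0.
Hypothesis adj_sym : symmetric adj.
Hypothesis adj_irr : irreflexive adj.
Hypothesis adj_sep : forall i j, (i < m)%N -> (j < m)%N -> i != j -> ~~ adj i j ->
  exists2 x, (x < m)%N & adj x i != adj x j.

(* Equal supports force [r i = e_a + e_b], [r j = e_a - e_b] up to signs, and then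
   every [r x] has the same product with both, so no vertex separates [i] and [j]. *)
Lemma no_common_support i j (a b : 'I_N) : (i < m)%N -> (j < m)%N -> i != j -> a != b ->
  pm1 (r i a) -> pm1 (r i b) -> pm1 (r j a) -> pm1 (r j b) ->
  (forall c, c != a -> c != b -> r i c = 0) ->
  (forall c, c != a -> c != b -> r j c = 0) -> False.
Proof.
move=> im jm ij ab pia pib pja pjb ri0 rj0.
have dij := r_dot im jm ij; rewrite (dotv_supp2 _ ab rj0) in dij.
have nadj : ~~ adj i j.
  by apply/negP=> aij; move: dij; rewrite aij;
    case: pia => ->; case: pib => ->; case: pja => ->; case: pjb => ->.
have [x xm sep] := adj_sep im jm ij nadj.
have [xi|xi] := eqVneq x i; first by move: sep; rewrite xi adj_irr (negbTE nadj).
have [xj|xj] := eqVneq x j; first by move: sep; rewrite xj adj_irr adj_sym (negbTE nadj).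
move: sep (r_dot xm im xi) (r_dot xm jm xj).
rewrite (dotv_supp2 _ ab ri0) (dotv_supp2 _ ab rj0).
by case: (adj x i); case: (adj x j) => //= _;
  case: pia => ->; case: pib => ->; case: pja => ->; case: pjb => ->; lia.
Qed.

Lemma common_coord_adj i j c : (i < m)%N -> (j < m)%N -> i != j ->
  r i c != 0 -> r j c != 0 -> adj i j /\ r i c * r j c = -1.
Proof.
move=> im jm ij ric rjc.
have [c1 [c1c pic pic1 ri0]] := dotv_norm2_at (r_norm im) ric.
have [c2 [c2c pjc pjc2 rj0]] := dotv_norm2_at (r_norm jm) rjc.
have [e12|n12] := eqVneq c1 c2.
  subst c2; exfalso; apply: (no_common_support im jm ij c1c pic1 pic pjc2 pjc) => e e1 ec.
    exact: ri0.
  exact: rj0.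
have ric2 : r i c2 = 0 by apply: ri0; rewrite // eq_sym.
have dij : r i c * r j c = if adj i j then -1 else 0.
  by rewrite -(r_dot im jm ij) (@dotv_supp2 _ _ _ c c2) ?ric2 ?mul0r ?addr0 // eq_sym.
have : r i c * r j c != 0 by rewrite mulf_neq0.
by rewrite dij; case: (adj i j).
Qed.

Definition coord_mult (c : 'I_N) : nat := (\sum_(i < m) (r i c != 0))%N.

Definition private_coords i : nat := (\sum_(c < N) ((r i c != 0) && (coord_mult c == 1)))%N.

Lemma support_size i : (i < m)%N -> (\sum_(c < N) (r i c != 0) = 2)%N.
Proof.
move=> im; have [a [b [ab pa pb r0]]] := dotv_norm2 (r_norm im).
rewrite (bigD1 a) //= (bigD1 b) 1?eq_sym //= big1 => [|c /andP[ca cb]].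
  by case: pa => ->; case: pb => ->.
by rewrite r0.
Qed.

Lemma sum_coord_mult : (\sum_(c < N) coord_mult c = 2 * m)%N.
Proof.
rewrite exchange_big (eq_bigr (fun=> 2%N)) => [|i _]; last exact: support_size.
by rewrite sum_nat_const card_ord mulnC.
Qed.

(* Two vectors meeting at [c] have product [-1] there, so at most one of them is [+1]
   and at most one is [-1]. *)
Lemma coord_mult_le2 c : (coord_mult c <= 2)%N.
Proof.
have at_most_one (s : int) : s != 0 -> (\sum_(i < m) (r i c == s) <= 1)%N.
  move=> s0; have [i ris|] := pickP (fun i : 'I_m => r i c == s); last first.
    by move=> none; rewrite big1 // => i _; rewrite none.
  rewrite (bigD1 i) //= ris big1 // => j ji; case: eqP => // rjs.
  have ij : (i : nat) != j by rewrite eq_sym.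
  have ric : r i c != 0 by rewrite (eqP ris).
  have rjc : r j c != 0 by rewrite rjs.
  have [_] := common_coord_adj (ltn_ord i) (ltn_ord j) ij ric rjc.
  by rewrite (eqP ris) rjs; nia.
rewrite /coord_mult (eq_bigr (fun i : 'I_m => addn (r i c == 1) (r i c == -1))) => [|i _].
  by rewrite big_split /= -[2%N]/(1 + 1)%N leq_add ?at_most_one.
by have [->|/(dotv_norm2_at (r_norm (ltn_ord i)))[_ [_ [] -> _ _]]] := eqVneq (r i c) 0.
Qed.

Lemma coord_mult_eq1 i c : (i < m)%N -> r i c != 0 ->
  (forall u, (u < m)%N -> adj u i -> r u c = 0) -> coord_mult c = 1%N.
Proof.
move=> im ric nbr0; rewrite /coord_mult (bigD1 (Ordinal im)) //= ric big1 // => j ji.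
apply/eqP; rewrite eqb0 negbK; apply: contraT => rjc.
have ij : i != j by rewrite eq_sym.
have [aij _] := common_coord_adj im (ltn_ord j) ij ric rjc.
by move: rjc; rewrite nbr0 ?eqxx // adj_sym.
Qed.

Lemma private_coords_isolated i : (i < m)%N -> (forall x, (x < m)%N -> ~~ adj x i) ->
  (2 <= private_coords i)%N.
Proof.
move=> im iso; have [a [b [ab pa pb _]]] := dotv_norm2 (r_norm im).
have nz z : pm1 z -> z != 0 by case=> ->.
have lonely c : pm1 (r i c) -> coord_mult c = 1%N.
  by move/nz=> ric; apply: (coord_mult_eq1 im ric) => x xm; rewrite (negbTE (iso x xm)).
rewrite /private_coords (bigD1 a) //= (bigD1 b) /=; last by rewrite eq_sym.
by rewrite (nz _ pa) (nz _ pb) (lonely a pa) (lonely b pb).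
Qed.

(* The unique neighbour [u] cannot use both coordinates of [r i], by
   [no_common_support]; a coordinate it misses is private to [i]. *)
Lemma private_coords_end i u : (i < m)%N -> (u < m)%N -> adj u i ->
  (forall x, (x < m)%N -> adj x i -> x = u) -> (1 <= private_coords i)%N.
Proof.
move=> im um aui nbr; have [a [b [ab pa pb ri0]]] := dotv_norm2 (r_norm im).
have nz z : pm1 z -> z != 0 by case=> ->.
have [c [ric ruc]] : exists c, r i c != 0 /\ r u c = 0.
  have [rua|rua] := eqVneq (r u a) 0; first by exists a; rewrite nz.
  have [rub|rub] := eqVneq (r u b) 0; first by exists b; rewrite nz.
  exfalso; have ui : u != i by apply: contraTneq aui => ->; rewrite adj_irr.
  have [c' [c'a pua puc' ru0]] := dotv_norm2_at (r_norm um) rua.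
  have bc' : b = c'.
    by apply/eqP; apply: contraNT rub => bc'; rewrite ru0 // eq_sym.
  subst c'; apply: (no_common_support um im ui ab pua puc' pa pb) => e ea eb.
    exact: ru0.
  exact: ri0.
rewrite /private_coords (bigD1 c) //= ric (@coord_mult_eq1 i) // => x xm axi.
by rewrite (nbr x xm axi).
Qed.

Lemma sum_private_coords : (2 * m + \sum_(i < m) private_coords i <= 2 * N)%N.
Proof.
have -> : (\sum_(i < m) private_coords i = \sum_(c < N) (coord_mult c == 1))%N.
  rewrite exchange_big; apply: eq_bigr => c _ /=.
  have [m1|] := eqVneq (coord_mult c) 1%N; last by rewrite big1 // => i _; rewrite andbF.
  by rewrite -[RHS]/1%N -m1; apply: eq_bigr => i _; rewrite andbT.
have -> : (2 * N = \sum_(c < N) 2)%N by rewrite sum_nat_const card_ord mulnC.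
rewrite -sum_coord_mult -big_split /= leq_sum // => c _.
by have := coord_mult_le2 c; case: (coord_mult c) => [|[|[]]].
Qed.

End RootConfiguration.

Definition chain_adj (cs : seq (seq nat)) (i j : nat) : bool :=
  ((i.+1 == j) || (j.+1 == i)) && (nth 0%N (chain_ids cs) i == nth 0%N (chain_ids cs) j).

Lemma embedding_rows cs N : embeds_into_negZ (gram_sum cs) N ->
  exists r : nat -> 'I_N -> int,
    (forall i, (i < size (flatten cs))%N ->
       dotv (r i) (r i) = (nth 0%N (flatten cs) i)%:Z) /\
    (forall i j, (i < size (flatten cs))%N -> (j < size (flatten cs))%N -> i != j ->
       dotv (r i) (r j) = if chain_adj cs i j then -1 else 0).
Proof.
case=> A [_ AAT]; set n := size (flatten cs) in A AAT *.
pose r i : 'I_N -> int := if insub i is Some o then A o else fun=> 0.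
have dotvE i j (hi : (i < n)%N) (hj : (j < n)%N) :
    dotv (r i) (r j) = - gram_sum cs (Ordinal hi) (Ordinal hj).
  have := congr1 (fun M : 'M_n => M (Ordinal hi) (Ordinal hj)) AAT.
  by rewrite /r !insubT !mxE => <-; apply: eq_bigr => c _; rewrite mxE.
exists r; split=> [i hi | i j hi hj ij]; rewrite dotvE mxE /=.
  by rewrite eqxx opprK.
have -> : (Ordinal hi == Ordinal hj) = false by exact: negbTE ij.
by rewrite /chain_adj; case: ifP; rewrite ?oppr0.
Qed.

Lemma chains_T4 k : chains (T4 k) =
  [:: nseq 1 2; nseq 2 2; nseq 4 2; nseq k 2 ++ [:: k + 2; 9]]%N.
Proof. by rewrite /chains /= hjexp_p4_q4. Qed.

Lemma flatten_chains_T4 k : flatten (chains (T4 k)) = (nseq (k + 7) 2 ++ [:: k + 2; 9])%N.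
Proof. by rewrite chains_T4 /= cats0 (addnC k 7) nseqD. Qed.

Definition chain_id_T4 (i : nat) : nat := (0 < i) + (2 < i) + (6 < i).

Lemma nth_chain_ids_T4 k i : (i < k + 9)%N ->
  nth 0%N (chain_ids (chains (T4 k))) i = chain_id_T4 i.
Proof.
rewrite chains_T4 /chain_ids /= size_cat size_nseq /= cats0 => ik.
case: (ltnP i 7) => [|i7]; first by case: i {ik} => [|[|[|[|[|[|[|]]]]]]].
move: ik; rewrite -(subnKC i7); move: (i - 7)%N => j ik.
have jk : (j < k + 2)%N by lia.
by rewrite -[(7 + j)%N]/(j.+4.+3) /= nth_nseq jk.
Qed.

Definition adj_T4 (i j : nat) : bool :=
  ((i.+1 == j) || (j.+1 == i)) && (chain_id_T4 i == chain_id_T4 j).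

Lemma chain_adj_T4 k i j : (i < k + 9)%N -> (j < k + 9)%N ->
  chain_adj (chains (T4 k)) i j = adj_T4 i j.
Proof. by move=> ik jk; rewrite /chain_adj !nth_chain_ids_T4. Qed.

Lemma adj_T4_sym : symmetric adj_T4.
Proof. by move=> i j; rewrite /adj_T4 orbC [chain_id_T4 i == _]eq_sym. Qed.

Lemma adj_T4_irr : irreflexive adj_T4.
Proof. by move=> i; rewrite /adj_T4 !eqn_leq !ltnn. Qed.

Lemma adj_T4_succ i : adj_T4 i i.+1 = [&& i != 0, i != 2 & i != 6]%N.
Proof. by rewrite /adj_T4 eqxx /chain_id_T4; case: i => [|[|[|[|[|[|[|i]]]]]]]. Qed.

Lemma adj_T4_far i j : i.+1 != j -> j.+1 != i -> adj_T4 i j = false.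
Proof. by rewrite /adj_T4 => /negbTE-> /negbTE->. Qed.

Lemma adj_T4E x i : adj_T4 x i =
  (x.+1 == i) && [&& x != 0, x != 2 & x != 6]%N ||
  (i.+1 == x) && [&& i != 0, i != 2 & i != 6]%N.
Proof.
have [<-|ne1] := eqVneq x.+1 i.
  by rewrite adj_T4_succ (_ : (x.+2 == x) = false) ?andbF ?orbF //; elim: x.
have [<-|ne2] := eqVneq i.+1 x; first by rewrite adj_T4_sym adj_T4_succ.
exact: adj_T4_far.
Qed.

(* [3 < k] excludes k = 1 and k = 3, where the (-2)-part of the last chain is a single
   vertex (a twin of vertex 0) or a path with three vertices (whose ends are twins). *)
Lemma adj_T4_sep k i j : (3 < k)%N -> (i < k + 7)%N -> (j < k + 7)%N -> i != j ->
  ~~ adj_T4 i j -> exists2 x, (x < k + 7)%N & adj_T4 x i != adj_T4 x j.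
Proof.
move=> k3; wlog ij : i j / (i < j)%N.
  move=> sep im jm ij nadj; case: (ltngtP i j) => [lt | gt | eq_ij].
  - exact: sep.
  - rewrite eq_sym adj_T4_sym in ij nadj.
    by have [x xm sepx] := sep j i gt jm im ij nadj; exists x; rewrite // eq_sym.
  - by rewrite eq_ij eqxx in ij.
move=> im jm _ nadj.
have [jr|jr] := boolP [&& j != 2, j != 6 & j != k + 6]%N.
  exists j.+1; first by lia.
  rewrite (@adj_T4_far j.+1 i) 1?adj_T4_sym ?adj_T4_succ; lia.
have [ji|ji] := boolP ((i.+2 == j) && (i != 0))%N.
  exists i.-1; first by lia.
  rewrite (@adj_T4_far i.-1 j); try lia.
  rewrite -[X in adj_T4 _ X](prednK (_ : (0 < i)%N)) ?adj_T4_succ; lia.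
exists j.-1; first by lia.
have -> : adj_T4 j.-1 i = false.
  have [e|ne] := eqVneq i.+1 j.-1; last by apply: adj_T4_far; lia.
  by have [-> ->] : i = 0%N /\ j = 2%N by lia.
rewrite -[X in adj_T4 _ X](prednK (_ : (0 < j)%N)) ?adj_T4_succ; lia.
Qed.

Lemma T4_not_embeds k : (3 < k)%N -> ~ embeds_into_negZ (gram_sum (chains (T4 k))) (k + 10).
Proof.
move=> k3 /embedding_rows[r []].
rewrite flatten_chains_T4 size_cat size_nseq [size _]/= => r_norm r_dot.
have norm2 i : (i < k + 7)%N -> dotv (r i) (r i) = 2.
  by move=> im; rewrite r_norm ?nth_cat ?size_nseq ?im ?nth_nseq ?im //; lia.
have dot i j : (i < k + 7)%N -> (j < k + 7)%N -> i != j ->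
    dotv (r i) (r j) = if adj_T4 i j then -1 else 0.
  by move=> im jm ij; rewrite r_dot ?chain_adj_T4 //; lia.
have sep i j := @adj_T4_sep k i j k3.
have count := sum_private_coords norm2 dot adj_T4_sym adj_T4_irr sep.
have iso := private_coords_isolated norm2 dot adj_T4_sym adj_T4_irr sep.
have leaf := private_coords_end norm2 dot adj_T4_sym adj_T4_irr sep.
set P := private_coords (k + 7) r in count iso leaf *.
suff : (8 <= \sum_(i < k + 7) P i)%N by lia.
have p0 : (1 < P 0)%N by apply: iso => [|x _]; rewrite ?adj_T4E /= ?andbF; lia.
have p1 : (0 < P 1)%N by apply: (leaf _ 2%N) => [|||x _]; rewrite ?adj_T4E; lia.
have p2 : (0 < P 2)%N by apply: (leaf _ 1%N) => [|||x _]; rewrite ?adj_T4E; lia.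
have p3 : (0 < P 3)%N by apply: (leaf _ 4%N) => [|||x _]; rewrite ?adj_T4E; lia.
have p6 : (0 < P 6)%N by apply: (leaf _ 5%N) => [|||x _]; rewrite ?adj_T4E; lia.
have p7 : (0 < P 7)%N by apply: (leaf _ 8%N) => [|||x _]; rewrite ?adj_T4E; lia.
have pk : (0 < P (k + 6))%N.
  by apply: (leaf _ (k + 5)%N) => [|||x xm]; rewrite ?adj_T4E; lia.
apply: leq_trans (_ : 8 <= \sum_(i <- [:: 0; 1; 2; 3; 6; 7; k + 6]) P i)%N _.
  by rewrite !big_cons big_nil; lia.
rewrite -(big_mkord xpredT P).
apply: (uniq_sub_le_big leqnn (fun x y => leq_addr y x)); rewrite ?iota_uniq //=.
  rewrite !inE; lia.
by move=> i; rewrite mem_iota !inE; lia.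
Qed.

Theorem mainTheorem3 (k : nat) :
  (12 <= k)%N -> (k %% 3 != 2)%N ->
  let p4 := (9 * k ^ 2 + 17 * k + 17)%N in
  let q4 := (9 * k ^ 2 + 8 * k + 9)%N in
  let T := [:: (2, 1); (3, 2); (5, 4); (p4, q4)]%N in
  (p4%:R / q4%:R : rat) = hjval (nseq k 2%N ++ [:: (2 + k)%N; 9%N]) /\
  qinv p4 q4 = (k ^ 2 + 2 * k + 2)%N /\
  gcdn p4 30 = 1%N /\
  K2 T = (3 * k ^ 2 + 139 * k + 154)%:R / (15 * p4)%:R /\
  (0 < K2 T /\ K2 T < 3 * eorb T) /\
  3 * eorb T = 1 / 10 + 3 / p4%:R /\
  ~ embeds_into_negZ (gram_sum (chains T)) (k + 10).
Proof.
move=> k12 k3 p q T.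
have k_gt3 : (3 < k)%N by apply: leq_trans k12.
have K2E : K2 T = (3 * k ^ 2 + 139 * k + 154)%:R / (15 * p)%:R.
  by apply: K2_T4; lia.
split; first exact: hjval_p4_q4.
split; first exact: qinv_p4_q4.
split; first exact: coprime_p4_30.
split; first exact: K2E.
split; first split.
- by rewrite K2E /p divr_gt0 // ltr0n; lia.
- by rewrite eorb_T4; exact: K2_T4_lt.
split; first exact: eorb_T4.
exact: T4_not_embeds.
Qed.
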